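(* Let $p$ be a prime and let $G$ be a $2$-tuple regular finite group of exponent $p^s$ for some $s\in\mathbb{N}$. For every $i\in\{0,\ldots,s\}$, every element of $\Omega_i(G)$ has order at most $p^i$ and is a $p^{s-i}$-th power of an element of $G$. In particular, $\Omega_i(G)$ is $2$-tuple regular.
   Context: $\Omega_i(G)$ is the subgroup generated by all elements of order dividing $p^i$. A finite group $G$ is $2$-tuple regular if for all pairs $(g_1,g_2),(h_1,h_2)\in G^2$ (entries may coincide) for which $g_1\mapsto h_1,g_2\mapsto h_2$ defines an isomorphism $\langle g_1,g_2\rangle\to\langle h_1,h_2\rangle$, there is a bijection $\Psi\colon G\to G$ such that for every $g\in G$ the assignment $g_1\mapsto h_1,g_2\mapsto h_2,g\mapsto\Psi(g)$ defines an isomorphism $\langle g_1,g_2,g\rangle\to\langle h_1,h_2,\Psi(g)\rangle$. *)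

From mathcomp Require Import all_boot all_fingroup all_solvable.
Set Implicit Arguments. Unset Strict Implicit. Unset Printing Implicit Defensive.
Local Open Scope group_scope.

Definition Omega (gT : finGroupType) (p i : nat) (G : {set gT}) : {set gT} :=
  <<[set x in G | x ^+ (p ^ i) == 1]>>.

(* "x_k |-> y_k (k < size xs) defines an isomorphism
    <x_1,...,x_n> -> <y_1,...,y_n>": there is a map f that is an injective
   homomorphism on <xs>, with image <ys>, sending each x_k to y_k. *)
Definition assign_iso (gT : finGroupType) (xs ys : seq gT) : Prop :=
  size xs = size ys /\
  exists f : gT -> gT,
    [/\ {in <<[set x in xs]>> &, {morph f : x y / x * y}},
        {in <<[set x in xs]>> &, injective f},
        f @: <<[set x in xs]>> = <<[set y in ys]>> &
        forall k, k < size xs -> f (nth 1 xs k) = nth 1 ys k].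

Definition tuple2_regular (gT : finGroupType) (G : {set gT}) : Prop :=
  forall g1 g2 h1 h2 : gT,
    g1 \in G -> g2 \in G -> h1 \in G -> h2 \in G ->
    assign_iso [:: g1; g2] [:: h1; h2] ->
    exists Psi : gT -> gT,
      [/\ {in G, forall g, Psi g \in G},
          {in G &, injective Psi},
          Psi @: G = G &
          forall g, g \in G -> assign_iso [:: g1; g2; g] [:: h1; h2; Psi g]].

From mathcomp Require Import all_boot all_fingroup all_solvable.
Set Implicit Arguments. Unset Strict Implicit. Unset Printing Implicit Defensive.
Local Open Scope group_scope.

(* In a 2-tuple regular group elements of equal order are interchangeable: if
   #[x] = #[y], then for every h there is a g such that x |-> y, g |-> h extends
   to an isomorphism <x, g> -> <y, h>, so relations between x and g transfer to
   y and h.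
   In a regular p-group G the sets L_k = {x in G | x^(p^k) = 1} are subgroups,
   by induction on k: if L_k < G, pick u whose image in G / L_k is central of
   order p, so that #[u] = p^(k+1).  Each x in L_(k+1) \ L_k has the same order
   as u, hence is central modulo L_k as well, and (xy)^p lies in L_k for x, y in
   L_(k+1).  Thus Omega_i(G) = L_i.  If #[x] = p^j, transferring x onto the
   power c^(p^(s-j)) of an element c of order p^s shows that x is a power
   g^(p^(s-j)) = (g^(p^(i-j)))^(p^(s-i)).  Finally L_i is 2-tuple regular since
   the isomorphisms given by the regularity of G preserve x^(p^i) = 1. *)

Section TupleRegular.
Variable gT : finGroupType.
Implicit Types (A : {set gT}) (G H : {group gT}) (x y u h : gT).

Lemma Omega_Ldiv p i A : Omega p i A = <<'Ldiv_(p ^ i)(A)>>.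
Proof. by congr <<_>>; apply/setP=> x; rewrite !inE. Qed.

Lemma norm_Ldiv n G : G \subset 'N('Ldiv_n(G)).
Proof. by apply/subsetP=> x Gx; rewrite inE -LdivJ conjGid. Qed.

Lemma LdivX m n G x : x \in G -> (x ^+ m \in 'Ldiv_n(G)) = (x \in 'Ldiv_(m * n)(G)).
Proof. by move=> Gx; rewrite !inE groupX Gx // expgM. Qed.

Lemma order_pfactorS p k x : prime p ->
  x ^+ (p ^ k.+1) = 1 -> x ^+ (p ^ k) != 1 -> #[x] = (p ^ k.+1)%N.
Proof.
move=> pr_p /eqP; rewrite -!order_dvdn => /(dvdn_pfactor _ _ pr_p)[m le_mk1 ->].
rewrite dvdn_Pexp2l ?prime_gt1 // -ltnNge => lt_km.
by rewrite (@anti_leq m k.+1) ?le_mk1.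
Qed.

Lemma mem_gen_seq (s : seq gT) x : x \in s -> x \in <<[set y in s]>>.
Proof. by move=> sx; apply: mem_gen; rewrite inE. Qed.

Lemma expMg_mod n G H x y : G \subset 'N(H) -> x \in G -> y \in G ->
  [~ x, y] \in H -> x ^+ n \in H -> y ^+ n \in H -> (x * y) ^+ n \in H.
Proof.
move=> nHG Gx Gy Hxy Hxn Hyn.
have [Nx Ny] := (subsetP nHG x Gx, subsetP nHG y Gy).
apply: coset_idr; first by rewrite groupX ?groupM.
have cxy : commute (coset H x) (coset H y).
  by apply/commgP; rewrite -morphR //; apply/eqP/coset_id.
by rewrite morphX ?groupM // morphM // expgMn // -!morphX //= !coset_id ?mulg1.
Qed.

Lemma pgroup_central_coset p G H : prime p -> p.-group G -> H <| G ->
  ~~ (G \subset H) ->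
  exists2 u, u \in G :\: H & u ^+ p \in H /\ {in G, forall h, [~ u, h] \in H}.
Proof.
move=> pr_p pG /andP[_ nHG] not_sGH.
have ntQ : G / H != 1 by rewrite -subG1 quotient_sub1.
have pZ : p.-group 'Z(G / H) := pgroupS (center_sub _) (quotient_pgroup _ pG).
have ntZ : 'Z(G / H) != 1 by rewrite center_nil_eq1 ?(pgroup_nil (quotient_pgroup _ pG)).
have [_ p_dv_Z _] := pgroup_pdiv pZ ntZ.
have [Hu Zu oHu] := Cauchy pr_p p_dv_Z.
have /morphimP[u Nu Gu def_Hu] := subsetP (center_sub _) _ Zu.
exists u.
  rewrite inE Gu andbT; apply/negP=> /coset_id Hu1.
  by move: oHu; rewrite def_Hu /= Hu1 order1 => p1; rewrite -p1 in pr_p.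
split=> [|h Gh].
  by apply: coset_idr; rewrite ?groupX // morphX // -def_Hu -oHu expg_order.
have Nh := subsetP nHG h Gh.
apply: coset_idr; first by rewrite groupR.
rewrite morphR // -def_Hu; apply/eqP/commgP.
by case/centerP: Zu => _; apply; apply: mem_quotient.
Qed.

Lemma assign_iso_same_order x y : #[x] = #[y] -> assign_iso [:: x; x] [:: y; y].
Proof.
move=> oxy; have dvd_yx : #[y] %| #[x] by rewrite oxy.
have gen_xx a : <<[set z in [:: a; a]]>> = <[a]>.
  by congr <<_>>; apply/setP=> z; rewrite !inE orbb.
split=> //; exists (eltm dvd_yx); rewrite gen_xx; split.
- exact: eltmM.
- by apply/injmP; rewrite injm_eltm oxy.
- by rewrite -morphimEdom im_eltm gen_xx.
- by case=> [|[|]] //= _; rewrite eltm_id.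
Qed.

Section Regular.
Variable A : {set gT}.
Hypothesis regA : tuple2_regular A.

Lemma regular_transfer x y h : x \in A -> y \in A -> #[x] = #[y] -> h \in A ->
  exists2 g, g \in A & exists f : {morphism <<[set z in [:: x; x; g]]>> >-> gT},
    [/\ 'injm f, f x = y & f g = h].
Proof.
move=> Ax Ay oxy Ah.
have [Psi [_ _ imPsi isoPsi]] := regA Ax Ax Ay Ay (assign_iso_same_order oxy).
have /imsetP[g Ag ->] : h \in Psi @: A by rewrite imPsi.
have [_ [f [fM injf _ fs]]] := isoPsi g Ag.
exists g => //; exists (Morphism fM).
by split; [apply/injmP | apply: fs 0%N _ | apply: fs 2%N _].
Qed.

Lemma regular_comm_expg1 n u x : u \in A -> x \in A -> #[u] = #[x] ->
  {in A, forall h, [~ u, h] ^+ n = 1} -> {in A, forall h, [~ x, h] ^+ n = 1}.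
Proof.
move=> Au Ax oux cu h Ah.
have [g Ag [f [_ fu fg]]] := regular_transfer Au Ax oux Ah.
have [Du Dg] : u \in <<[set z in [:: u; u; g]]>> /\ g \in <<[set z in [:: u; u; g]]>>.
  by split; apply: mem_gen_seq; rewrite !inE eqxx ?orbT.
by rewrite -fu -fg -morphR // -morphX ?groupR // cu // morph1.
Qed.

Lemma tuple2_regular_Ldiv n : tuple2_regular 'Ldiv_n(A).
Proof.
move=> g1 g2 h1 h2 /setIP[A1 _] /setIP[A2 _] /setIP[B1 _] /setIP[B2 _] iso12.
have [Psi [PsiA injPsi _ isoPsi]] := regA A1 A2 B1 B2 iso12.
have PsiL g : g \in 'Ldiv_n(A) -> Psi g \in 'Ldiv_n(A).
  case/LdivP=> Ag gn; apply/LdivP; split; first exact: PsiA.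
  have [_ [f [fM _ _ fs]]] := isoPsi g Ag.
  have Dg : g \in <<[set z in [:: g1; g2; g]]>>.
    by apply: mem_gen_seq; rewrite !inE eqxx ?orbT.
  by rewrite -[Psi g](fs 2%N isT) -(morphX (Morphism fM)) // gn morph1.
have injPsiL : {in 'Ldiv_n(A) &, injective Psi}.
  by move=> a b /setIP[Aa _] /setIP[Ab _]; apply: injPsi.
exists Psi; split=> // [|g /setIP[Ag _]]; last exact: isoPsi.
apply/eqP; rewrite eqEcard card_in_imset // leqnn andbT.
by apply/subsetP=> _ /imsetP[g Lg ->]; apply: PsiL.
Qed.

End Regular.

Lemma regular_root G d x c : tuple2_regular G ->
    x \in G -> c \in G -> x ^+ d = 1 -> d %| #[c] ->
  exists2 y, y \in G & x = y ^+ (#[c] %/ d).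
Proof.
move=> regG Gx Gc xd1 d_dv_c; have x_dv_d : #[x] %| d by rewrite order_dvdn xd1.
have [a oc] := dvdnP d_dv_c; have [b def_d] := dvdnP x_dv_d.
have oc_abx : #[c] = (a * b * #[x])%N by rewrite oc def_d mulnA.
have ab_dv_c : a * b %| #[c] by rewrite oc_abx dvdn_mulr.
have ocx : #[c ^+ (a * b)] = #[x].
  by rewrite orderXdiv // oc_abx mulKn // (dvdn_gt0 (order_gt0 c) ab_dv_c).
have [g Gg [f [injf fx fg]]] := regular_transfer regG Gx (groupX _ Gc) (esym ocx) Gc.
have [Dx Dg] : x \in <<[set z in [:: x; x; g]]>> /\ g \in <<[set z in [:: x; x; g]]>>.
  by split; apply: mem_gen_seq; rewrite !inE eqxx ?orbT.
exists (g ^+ b); first exact: groupX.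
rewrite oc mulnK ?(dvdn_gt0 (order_gt0 c) d_dv_c) // -expgM mulnC.
by apply: (injmP injf); rewrite ?groupX // morphX // fx fg.
Qed.

Section RegularPGroup.
Variables (p : nat) (G : {group gT}).
Hypotheses (pr_p : prime p) (pG : p.-group G) (regG : tuple2_regular G).

Lemma regular_Ldiv_comm k :
    group_set 'Ldiv_(p ^ k)(G) -> ~~ (G \subset 'Ldiv_(p ^ k)(G)) ->
  {in 'Ldiv_(p ^ k.+1)(G) & G, forall x h, [~ x, h] \in 'Ldiv_(p ^ k)(G)}.
Proof.
move=> gsN not_sGN; pose N := Group gsN.
have order_Ldiv y : y \in 'Ldiv_(p ^ k.+1)(G) -> y \notin N -> #[y] = (p ^ k.+1)%N.
  case/LdivP=> Gy yk1 Ny'; apply: order_pfactorS => //.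
  by apply: contra Ny' => /eqP yk; apply/LdivP.
have nsNG : N <| G by rewrite /normal subsetIl norm_Ldiv.
have [u /setDP[Gu Nu'] [Nup cuN]] := pgroup_central_coset pr_p pG nsNG not_sGN.
have ou : #[u] = (p ^ k.+1)%N by rewrite order_Ldiv // expnS -(LdivX _ _ Gu).
move=> x h Lx Gh; have /LdivP[Gx _] := Lx.
have [Nx | Nx'] := boolP (x \in N).
  suff : [~ x, h] \in N by [].
  by rewrite commgEl groupM ?groupV // memJ_norm // (subsetP (norm_Ldiv _ _)).
apply/LdivP; split; first exact: groupR.
apply: (regular_comm_expg1 regG Gu Gx) => //; first by rewrite ou order_Ldiv.
by move=> h' /cuN/LdivP[].
Qed.

Lemma group_set_Ldiv k : group_set 'Ldiv_(p ^ k)(G).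
Proof.
elim: k => [|k IHk].
  rewrite expn0 (_ : 'Ldiv_1(G) = 1) ?group_set_one //.
  by apply/setP=> x; rewrite !inE expg1 andb_idl // => /eqP->.
have [sGN | not_sGN] := boolP (G \subset 'Ldiv_(p ^ k)(G)).
  suff -> : 'Ldiv_(p ^ k.+1)(G) = G by apply: groupP.
  apply/setIidPl/subsetP=> x /(subsetP sGN)/LdivP[_ xk].
  by rewrite inE expnSr expgM xk expg1n.
apply/group_setP; split=> [|x y Lx Ly]; first by apply/LdivP; rewrite group1 expg1n.
have [/LdivP[Gx _] /LdivP[Gy _]] := (Lx, Ly).
rewrite expnS -(LdivX _ _ (groupM Gx Gy)).
apply: (@expMg_mod _ G (Group IHk)) => //=; first exact: norm_Ldiv.
- exact: regular_Ldiv_comm.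
- by rewrite LdivX // -expnS.
- by rewrite LdivX // -expnS.
Qed.

End RegularPGroup.

End TupleRegular.

Theorem lemma4p5 (gT : finGroupType) (G : {group gT}) (p s : nat) :
  prime p -> exponent G = (p ^ s)%N -> tuple2_regular G ->
  forall i : nat, (i <= s)%N ->
    (forall x, x \in Omega p i G ->
       (#[x] <= p ^ i)%N /\ exists2 y, y \in G & x = y ^+ (p ^ (s - i))) /\
    tuple2_regular (Omega p i G).
Proof.
move=> pr_p expG regG i le_is.
have pG : p.-group G by rewrite -pnat_exponent expG pnatX pnat_id.
have [c Gc oc] : exists2 c, c \in G & #[c] = (p ^ s)%N.
  by have [c Gc def_exp] := exponent_witness (pgroup_nil pG); exists c; rewrite -?def_exp.
rewrite Omega_Ldiv gen_set_id ?group_set_Ldiv //.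
split; last exact: tuple2_regular_Ldiv.
move=> x /LdivP[Gx xi].
split; first by rewrite dvdn_leq ?expn_gt0 ?prime_gt0 // order_dvdn xi.
have [|y Gy ->] := regular_root regG Gx Gc xi; first by rewrite oc dvdn_exp2l.
by exists y; rewrite // oc -expnB ?prime_gt0.
Qed.
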